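(* Let $Q_{\mathsf{matrix}}(A,C) :- R_1(A,B), R_2(B,C)$ and let $D=(R_1,R_2)$ be any database with $R_2=(\pi_B R_2)\times(\pi_C R_2)$. Then there is a solution to $\mathrm{SWP}(Q_{\mathsf{matrix}},D)$ that is integral, i.e. there is a sub-database $(R_1',R_2')$ with $R_1'\subseteq R_1$, $R_2'\subseteq R_2$, $R_2'=(\pi_B R_2')\times(\pi_C R_2)$, such that $Q_{\mathsf{matrix}}(R_1',R_2')=Q_{\mathsf{matrix}}(D)$ and $|R_1'|+|R_2'|$ is minimum among all sub-databases $D''\subseteq D$ with $Q_{\mathsf{matrix}}(D'')=Q_{\mathsf{matrix}}(D)$.
   Context: For a conjunctive query $Q$ and database $D$ (finite sets of tuples for its relations), $Q(D)$ is the projection onto the output attributes of the natural join of the relations. $\mathrm{SWP}(Q,D)$ asks for a subset $D'\subseteq D$ of tuples with $Q(D')=Q(D)$ and $|D'|$ minimum. $\pi$ denotes projection. *)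

From HB Require Import structures.
From mathcomp Require Import all_boot.
From mathcomp Require Import finmap.
Set Implicit Arguments. Unset Strict Implicit. Unset Printing Implicit Defensive.
Local Open Scope fset_scope.

Definition Qmatrix (A B C : choiceType) (R1 : {fset A * B}) (R2 : {fset B * C})
  : {fset A * C} :=
  [fset (p.1.1, p.2.2) | p in R1 `*` R2 & p.1.2 == p.2.1].

Definition piB (B C : choiceType) (R2 : {fset B * C}) : {fset B} := [fset p.1 | p in R2].
Definition piC (B C : choiceType) (R2 : {fset B * C}) : {fset C} := [fset p.2 | p in R2].

From HB Require Import structures.
From mathcomp Require Import all_boot.
From mathcomp Require Import finmap.
Set Implicit Arguments. Unset Strict Implicit. Unset Printing Implicit Defensive.
Local Open Scope fset_scope.

(* Start from a minimum-size sub-database (S1, S2) with the same output and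
   let X be the fiber {b | (b, c) in S2} of a value c of the C column.  Since
   R2 is a full rectangle, with every output (a, c') also (a, c) is an output,
   so it has a witness b' in X with (a, b') in S1, and (b', c') lies in the
   rectangle X * piC R2.  Hence the tuples of S1 landing in X together with
   X * piC R2 still produce the whole output, and choosing c with the
   smallest fiber gives |X| * |piC R2| <= sum of all fibers of S2 <= |S2|. *)

Lemma fset_argmin (T : choiceType) (f : T -> nat) (K : {fset T}) (x0 : T) :
  x0 \in K -> exists2 x, x \in K & forall y, y \in K -> f x <= f y.
Proof.
move=> x0K.
have [|_ /imfsetP[x /= xK ->] minx] := ex_minnP (P := mem [fset f x | x in K]).
  by exists (f x0); apply: in_imfset.
by exists x => // y yK; apply/minx/in_imfset.
Qed.

Lemma exists_min_subpair (T U : choiceType) (rT : eqType)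
    (Q : {fset T} -> {fset U} -> rT) (R1 : {fset T}) (R2 : {fset U}) :
  exists S1 S2, [/\ S1 `<=` R1, S2 `<=` R2, Q S1 S2 = Q R1 R2 &
    forall T1 T2, T1 `<=` R1 -> T2 `<=` R2 -> Q T1 T2 = Q R1 R2 ->
      (#|` S1| + #|` S2| <= #|` T1| + #|` T2|)%N].
Proof.
pose sols := [fset S in fpowerset R1 `*` fpowerset R2 | Q S.1 S.2 == Q R1 R2].
have solsP S1 S2 :
    ((S1, S2) \in sols) = [&& S1 `<=` R1, S2 `<=` R2 & Q S1 S2 == Q R1 R2].
  by rewrite !inE /= !fpowersetE andbA.
have R12sol : (R1, R2) \in sols by rewrite solsP !fsubset_refl eqxx.
pose size2 (S : {fset T} * {fset U}) := (#|` S.1| + #|` S.2|)%N.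
have [[S1 S2]] := fset_argmin size2 R12sol.
rewrite solsP => /and3P[sS1 sS2 /eqP QS] minS.
exists S1, S2; split=> // T1 T2 sT1 sT2 QT.
by apply: (minS (T1, T2)); rewrite solsP sT1 sT2 QT eqxx.
Qed.

Section Projections.
Variables B C : choiceType.
Implicit Types (S : {fset B * C}) (X : {fset B}) (K : {fset C}).

Lemma piBP S b : reflect (exists c, (b, c) \in S) (b \in piB S).
Proof.
apply: (iffP idP) => [/imfsetP[[b' c] /= bcS ->] | [c bcS]]; first by exists c.
by apply/imfsetP; exists (b, c).
Qed.

Lemma piCP S c : reflect (exists b, (b, c) \in S) (c \in piC S).
Proof.
apply: (iffP idP) => [/imfsetP[[b c'] /= bcS ->] | [b bcS]]; first by exists b.
by apply/imfsetP; exists (b, c).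
Qed.

Lemma piB_fsetM X K c : c \in K -> piB (X `*` K) = X.
Proof.
move=> cK; apply/fsetP => b; apply/piBP/idP => [[c']|bX].
  by rewrite in_fsetM => /andP[].
by exists c; rewrite in_fsetM bX.
Qed.

Definition fiber S c : {fset B} := [fset p.1 | p in S & p.2 == c].

Lemma in_fiber S c b : (b \in fiber S c) = ((b, c) \in S).
Proof.
apply/imfsetP/idP => [[[b' c'] /=] | bcS].
  by rewrite !inE /= => /andP[bcS /eqP eq_c] ->; rewrite -eq_c.
by exists (b, c); rewrite // !inE bcS /=.
Qed.

Lemma card_fiber S c : #|` [fset p in S | p.2 == c]| = #|` fiber S c|.
Proof.
have -> : [fset p in S | p.2 == c] = [fset (b, c) | b in fiber S c].
  apply/fsetP => -[b c']; rewrite !inE /=.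
  apply/andP/imfsetP => [[bcS /eqP eq_c] | [b' + [-> ->]]].
    by exists b => //; move: bcS; rewrite eq_c -in_fiber.
  by move=> b'F; split; rewrite // -in_fiber.
by rewrite card_imfset // => b b' [].
Qed.

Lemma sum_card_fiber S (s : seq C) :
  uniq s -> \sum_(c <- s) #|` fiber S c| = #|` [fset p in S | p.2 \in s]|.
Proof.
elim: s => [_ | c s IH /= /andP[cNs /IH {}IH]].
  rewrite big_nil; apply/esym/eqP; rewrite cardfs_eq0 -fsubset0.
  by apply/fsubsetP => p; rewrite !inE andbF.
have split_c : [fset p in S | p.2 \in c :: s] =
    [fset p in S | p.2 == c] `|` [fset p in S | p.2 \in s].
  by apply/fsetP => p; rewrite !inE -andb_orr.
have disj_c : [fset p in S | p.2 == c] `&` [fset p in S | p.2 \in s] = fset0.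
  apply/fsetP => p; rewrite !inE.
  by case: eqP => [-> | _]; rewrite ?(negbTE cNs) !andbF.
by rewrite big_cons IH -card_fiber -cardfsUI disj_c cardfs0 addn0 split_c.
Qed.

Lemma sum_card_fiber_le S K : \sum_(c <- K) #|` fiber S c| <= #|` S|.
Proof. by rewrite sum_card_fiber ?fset_uniq // fsubset_leq_card ?fset_sub. Qed.

Lemma fiber_fsetM X K c : c \in K -> fiber (X `*` K) c = X.
Proof. by move=> cK; apply/fsetP => b; rewrite in_fiber in_fsetM cK andbT. Qed.

Lemma card_fsetM X K : #|` X `*` K| = #|` X| * #|` K|.
Proof.
have -> : X `*` K = [fset p in X `*` K | p.2 \in enum_fset K].
  by apply/fsetP => p; rewrite !inE -andbA andbb.
rewrite -sum_card_fiber ?fset_uniq // big_seq.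
under eq_bigr => c cK do rewrite fiber_fsetM //.
by rewrite -big_seq big_const_seq count_predT iter_addn_0.
Qed.

Lemma card_fsetM_min_fiber S K c :
  {in K, forall c', #|` fiber S c| <= #|` fiber S c'|} ->
  #|` fiber S c `*` K| <= #|` S|.
Proof.
move=> minc; apply: leq_trans (sum_card_fiber_le S K).
rewrite card_fsetM -iter_addn_0 -count_predT -big_const_seq !big_seq.
exact: leq_sum.
Qed.

End Projections.

Section Qmatrix.
Variables A B C : choiceType.

Lemma QmatrixP (R1 : {fset A * B}) (R2 : {fset B * C}) a c :
  reflect (exists2 b, (a, b) \in R1 & (b, c) \in R2) ((a, c) \in Qmatrix R1 R2).
Proof.
apply: (iffP idP) => [/imfsetP[[[a' b] [b' c']]] | [b abR1 bcR2]].
  rewrite !inE /= => /andP[/andP[abR1 bcR2] /eqP eq_b] [-> ->].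
  by exists b; rewrite // eq_b.
by apply/imfsetP; exists ((a, b), (b, c)); rewrite //= !inE abR1 bcR2 /=.
Qed.

Lemma Qmatrix_sub (R1 S1 : {fset A * B}) (R2 S2 : {fset B * C}) :
  S1 `<=` R1 -> S2 `<=` R2 -> Qmatrix S1 S2 `<=` Qmatrix R1 R2.
Proof.
move=> /fsubsetP sS1 /fsubsetP sS2.
apply/fsubsetP => -[a c] /QmatrixP[b abS1 bcS2].
by apply/QmatrixP; exists b; [apply: sS1 | apply: sS2].
Qed.

Lemma Qmatrix0r (R1 : {fset A * B}) : Qmatrix R1 (fset0 : {fset B * C}) = fset0.
Proof.
by apply/fsetP => -[a c]; rewrite inE; apply/QmatrixP => -[b _]; rewrite inE.
Qed.

Variables (R1 S1 : {fset A * B}) (R2 S2 : {fset B * C}).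
Hypothesis rectR2 : R2 = piB R2 `*` piC R2.
Hypotheses (sS1 : S1 `<=` R1) (sS2 : S2 `<=` R2).

Lemma fiber_fsetM_sub c : fiber S2 c `*` piC R2 `<=` R2.
Proof.
apply/fsubsetP => -[b c']; rewrite in_fsetM in_fiber /= => /andP[bcS2 c'C].
rewrite rectR2 in_fsetM /= c'C andbT.
by apply/piBP; exists c; apply: (fsubsetP sS2).
Qed.

Lemma Qmatrix_fiber_fsetM c : Qmatrix S1 S2 = Qmatrix R1 R2 -> c \in piC R2 ->
  Qmatrix [fset p in S1 | p.2 \in fiber S2 c] (fiber S2 c `*` piC R2)
  = Qmatrix R1 R2.
Proof.
move=> QS cC.
have sS1c : [fset p in S1 | p.2 \in fiber S2 c] `<=` R1.
  exact: fsubset_trans (fset_sub _ _) sS1.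
apply/eqP; rewrite eqEfsubset Qmatrix_sub ?fiber_fsetM_sub //=.
apply/fsubsetP => -[a c'] /QmatrixP[b abR1 bc'R2].
have bB : b \in piB R2 by apply/piBP; exists c'.
have c'C : c' \in piC R2 by apply/piCP; exists b.
have /QmatrixP[b' ab'S1 b'cS2] : (a, c) \in Qmatrix S1 S2.
  by rewrite QS; apply/QmatrixP; exists b; rewrite // rectR2 in_fsetM bB.
by apply/QmatrixP; exists b'; rewrite !inE ?in_fsetM /= in_fiber ?ab'S1 ?b'cS2.
Qed.

End Qmatrix.

Theorem lemma21 (A B C : choiceType) (R1 : {fset A * B}) (R2 : {fset B * C}) :
  R2 = piB R2 `*` piC R2 ->
  exists (R1' : {fset A * B}) (R2' : {fset B * C}),
    [/\ R1' `<=` R1, R2' `<=` R2,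
        R2' = piB R2' `*` piC R2,
        Qmatrix R1' R2' = Qmatrix R1 R2 &
        forall (S1 : {fset A * B}) (S2 : {fset B * C}),
          S1 `<=` R1 -> S2 `<=` R2 -> Qmatrix S1 S2 = Qmatrix R1 R2 ->
          (#|` R1'| + #|` R2'| <= #|` S1| + #|` S2|)%N].
Proof.
move=> rectR2.
have [S1 [S2 [sS1 sS2 QS minS]]] := exists_min_subpair (@Qmatrix A B C) R1 R2.
have [C0 | [c0 c0C]] := fset_0Vmem (piC R2).
  have R20 : R2 = fset0.
    by apply/fsetP => -[b c]; rewrite {1}rectR2 in_fsetM /= C0 !inE andbF.
  exists fset0, fset0; split=> //; rewrite ?fsub0set //.
  - by apply/fsetP => -[b c]; rewrite in_fsetM /= C0 !inE andbF.
  - by rewrite R20 !Qmatrix0r.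
have [c cC minc] := fset_argmin (fun c => #|` fiber S2 c|) c0C.
exists [fset p in S1 | p.2 \in fiber S2 c], (fiber S2 c `*` piC R2); split.
- exact: fsubset_trans (fset_sub _ _) sS1.
- exact: fiber_fsetM_sub.
- by rewrite (piB_fsetM _ cC).
- exact: Qmatrix_fiber_fsetM.
- move=> T1 T2 sT1 sT2 QT; apply: leq_trans (minS T1 T2 sT1 sT2 QT).
  apply: leq_add; first exact/fsubset_leq_card/fset_sub.
  exact: card_fsetM_min_fiber.
Qed.
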